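(* Under assumptions (A1)–(A6), for (almost) every $x$, $$\alpha(x)=\Big(1-\frac{\mu_{10}(x)}{\mu_{11}(x)}\Big)\Big(1-\frac{\gamma_0(x)}{\gamma_1(x)}\Big)P(M=1\mid A=1,Y=1,X=x),$$ $$\beta(x)=\Big(1-\frac{\mu_0(x)}{\mu_1(x)}\Big)-\alpha(x),$$ where $\mu_a(x)=P(Y=1\mid A=a,X=x)$.
   Context: Observed data $O=(X,A,M,Y)$ with covariates $X\in\mathbb{R}^d$, binary exposure $A$, binary mediator $M$, binary outcome $Y$. For $a,m\in\{0,1\}$, $Y(a,m)$ is the potential outcome under $A=a,M=m$, $M(a)$ the potential mediator, $Y(a):=Y(a,M(a))$, cross-world $Y(a,M(a'))$ by substitution, all on a common probability space with $O$. $\mu_{am}(x)=P(Y=1\mid A=a,M=m,X=x)$, $\gamma_a(x)=P(M=1\mid A=a,X=x)$. Total probabilities of indirect and direct causation: $\alpha(x)=P(Y(1,M(0))=0,\,Y(0,M(0))=0\mid Y(1,M(1))=1,X=x)$ and $\beta(x)=P(Y(1,M(0))=1,\,Y(0,M(0))=0\mid Y(1,M(1))=1,X=x)$. Assumptions: (A1) $A=a,M=m\Rightarrow Y=Y(a,m)$ and $A=a\Rightarrow M=M(a)$. (A2) $Y(1,1)\ge Y(1,0)\ge Y(0,0)$, $Y(1,1)\ge Y(0,1)$, $M(1)\ge M(0)$. (A3) $A\perp\{Y(1,1),Y(1,0),Y(0,1),Y(0,0),M(1),M(0)\}\mid X$. (A4) $\{Y(1,1),Y(1,0),Y(0,1),Y(0,0)\}\perp\{M(1),M(0)\}\mid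 X$. (A5) for some $\epsilon>0$, $P\{\min_{a,m}P(A=a,M=m\mid X)\ge\epsilon\}=1$. (A6) $P\{P(Y=1\mid A=1,M=1,X)\ge\epsilon\}=1$. *)

(* Everything is stated for the conditional law given X = x
   (one covariate stratum). *)
From mathcomp Require Import all_boot all_order all_algebra.
Set Implicit Arguments. Unset Strict Implicit. Unset Printing Implicit Defensive.
Import Order.TTheory GRing.Theory Num.Theory.
Local Open Scope ring_scope.

(* Sample space of the (conditional on X = x) joint law of
   (A, (Y(1,1), Y(1,0), Y(0,1), Y(0,0)), (M(1), M(0))). *)
Definition Omega : finType := (bool * (bool * bool * bool * bool) * (bool * bool))%type.

Definition Aof (w : Omega) : bool := w.1.1.
Definition Yvec (w : Omega) : bool * bool * bool * bool := w.1.2.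
Definition Mvec (w : Omega) : bool * bool := w.2.
Definition PO (w : Omega) := (Yvec w, Mvec w).

Definition Ypot (a m : bool) (w : Omega) : bool :=
  let: (y11, y10, y01, y00) := Yvec w in
  match a, m with
  | true, true => y11 | true, false => y10
  | false, true => y01 | false, false => y00 end.
Definition Mpot (a : bool) (w : Omega) : bool :=
  if a then (Mvec w).1 else (Mvec w).2.
Definition Ycw (a a' : bool) (w : Omega) : bool := Ypot a (Mpot a' w) w.

(* observed variables, defined by consistency (A1) *)
Definition Mobs (w : Omega) : bool := Mpot (Aof w) w.
Definition Yobs (w : Omega) : bool := Ypot (Aof w) (Mobs w) w.

Section Prob.
Variable R : realFieldType.

Definition is_distr (p : {ffun Omega -> R}) : Prop :=
  (forall w, 0 <= p w) /\ \sum_w p w = 1.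

Definition Pr (p : {ffun Omega -> R}) (E : pred Omega) : R := \sum_(w | E w) p w.

Definition CPr (p : {ffun Omega -> R}) (E F : pred Omega) : R :=
  Pr p [pred w | E w && F w] / Pr p F.

Definition mu2 (p : {ffun Omega -> R}) (a m : bool) : R :=
  CPr p [pred w | Yobs w] [pred w | (Aof w == a) && (Mobs w == m)].
Definition gam (p : {ffun Omega -> R}) (a : bool) : R := CPr p [pred w | Mobs w] [pred w | Aof w == a].
Definition mu1 (p : {ffun Omega -> R}) (a : bool) : R := CPr p [pred w | Yobs w] [pred w | Aof w == a].

Definition alpha (p : {ffun Omega -> R}) : R :=
  CPr p [pred w | ~~ Ycw true false w && ~~ Ycw false false w] [pred w | Ycw true true w].
Definition beta (p : {ffun Omega -> R}) : R :=
  CPr p [pred w | Ycw true false w && ~~ Ycw false false w] [pred w | Ycw true true w].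

Definition A2 (p : {ffun Omega -> R}) : Prop := forall w, 0 < p w ->
  [/\ Ypot true false w ==> Ypot true true w,
      Ypot false false w ==> Ypot true false w,
      Ypot false true w ==> Ypot true true w &
      Mpot false w ==> Mpot true w].

Definition A3 (p : {ffun Omega -> R}) : Prop := forall a v,
  Pr p [pred w | (Aof w == a) && (PO w == v)] =
  Pr p [pred w | Aof w == a] * Pr p [pred w | PO w == v].

Definition A4 (p : {ffun Omega -> R}) : Prop := forall u n,
  Pr p [pred w | (Yvec w == u) && (Mvec w == n)] =
  Pr p [pred w | Yvec w == u] * Pr p [pred w | Mvec w == n].

Definition A5 (p : {ffun Omega -> R}) (eps : R) : Prop := forall a m,
  eps <= Pr p [pred w | (Aof w == a) && (Mobs w == m)].

Definition A6 (p : {ffun Omega -> R}) (eps : R) : Prop := eps <= mu2 p true true.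

End Prob.

From mathcomp Require Import all_boot all_order all_algebra ring.
Set Implicit Arguments. Unset Strict Implicit. Unset Printing Implicit Defensive.
Import Order.TTheory GRing.Theory Num.Theory.
Local Open Scope ring_scope.

(* Randomization (A3) identifies each observed conditional probability with a
   probability of potential outcomes: mu_{1m} = P(Y(1,m)), gamma_a = P(M(a)),
   mu_a = P(Y(a,M(a))) and P(M = 1 | A = 1, Y = 1) = P(Y(1,1), M(1)) / P(Y(1,M(1))).
   Under monotonicity (A2) the indirect-causation event
   {Y(1,M(1)) = 1, Y(1,M(0)) = 0, Y(0,M(0)) = 0} is almost surely
   {Y(1,1) = 1, Y(1,0) = 0} /\ {M(1) = 1, M(0) = 0}, whose probability factors by
   (A4) into (P(Y(1,1)) - P(Y(1,0))) (P(M(1)) - P(M(0))); and the indirect and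
   direct events together form {Y(1,M(1)) = 1, Y(0,M(0)) = 0}, of probability
   P(Y(1,M(1))) - P(Y(0,M(0))).  Positivity (A5), (A6) keeps every denominator
   nonzero, and both formulas follow by field arithmetic. *)

Definition determined_by (T : finType) (f : Omega -> T) (E : pred Omega) :=
  forall w w', f w = f w' -> E w = E w'.

Lemma determined_byP (T : finType) (f : Omega -> T) (E : pred Omega) :
  determined_by f E -> exists H : pred T, forall w, E w = H (f w).
Proof.
move=> detE; exists (fun t => if [pick w | f w == t] is Some w then E w else false).
move=> w; case: pickP => [w' /eqP fw'|/(_ w)]; last by rewrite eqxx.
exact: detE.
Qed.

Section FiniteLaw.
Variables (R : realFieldType) (p : {ffun Omega -> R}).

Lemma Pr_ext (E F : pred Omega) : E =1 F -> Pr p E = Pr p F.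
Proof. by move=> eEF; apply: eq_bigl. Qed.

Lemma Pr_split (E F : pred Omega) :
  Pr p E = Pr p [pred w | E w && F w] + Pr p [pred w | E w && ~~ F w].
Proof. exact: bigID. Qed.

Lemma Pr_fibers (T : finType) (f : Omega -> T) (E : pred Omega) (H : pred T) :
  Pr p [pred w | E w && H (f w)] = \sum_(t | H t) Pr p [pred w | E w && (f w == t)].
Proof.
rewrite /Pr (partition_big f H); last by move=> w /andP[].
apply: eq_bigr => t Ht; apply: eq_bigl => w /=.
by case: eqP => [->|]; rewrite ?andbT ?andbF // Ht andbT.
Qed.

Lemma Pr_indep (T U : finType) (f : Omega -> T) (g : Omega -> U) (E F : pred Omega) :
  (forall t u, Pr p [pred w | (f w == t) && (g w == u)] =
               Pr p [pred w | f w == t] * Pr p [pred w | g w == u]) ->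
  determined_by f E -> determined_by g F ->
  Pr p [pred w | E w && F w] = Pr p E * Pr p F.
Proof.
move=> indep /determined_byP[H eE] /determined_byP[K eF].
have fibers (V : finType) (h : Omega -> V) (L : pred V) :
    Pr p [pred w | L (h w)] = \sum_(v | L v) Pr p [pred w | h w == v].
  by rewrite -(Pr_fibers h predT).
rewrite (Pr_ext eE) (Pr_ext eF) fibers fibers big_distrlr /=.
rewrite (@Pr_ext _ [pred w | K (g w) && H (f w)]) => [|w]; last by rewrite /= eE eF andbC.
rewrite Pr_fibers; apply: eq_bigr => t Ht.
rewrite (@Pr_ext _ [pred w | (f w == t) && K (g w)]) => [|w /=]; last by rewrite andbC.
by rewrite Pr_fibers; apply: eq_bigr => u Ku; rewrite indep.
Qed.

Hypothesis p_ge0 : forall w, 0 <= p w.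

Lemma Pr_eq_as (E F : pred Omega) : (forall w, 0 < p w -> E w = F w) -> Pr p E = Pr p F.
Proof.
move=> eEF; rewrite /Pr (big_mkcond E) (big_mkcond F); apply: eq_bigr => w _.
by have := p_ge0 w; rewrite le_eqVlt => /orP[/eqP <-|/eEF ->]; rewrite ?if_same.
Qed.

Lemma Pr_le (E F : pred Omega) : (forall w, E w -> F w) -> Pr p E <= Pr p F.
Proof.
move=> sEF; rewrite (Pr_split F E) (@Pr_ext _ E) => [|w /=]; last first.
  by case Ew: (E w); rewrite ?andbF // andbT sEF.
by rewrite lerDl sumr_ge0.
Qed.

Lemma Pr_diff (E F : pred Omega) : (forall w, 0 < p w -> F w -> E w) ->
  Pr p [pred w | E w && ~~ F w] = Pr p E - Pr p F.
Proof.
move=> FE; rewrite (Pr_split E F) (@Pr_eq_as [pred w | E w && F w] F) => [|w /FE].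
  by rewrite addrAC subrr add0r.
by rewrite /=; case: (F w) => [->|]; rewrite ?andbF.
Qed.
End FiniteLaw.

Lemma determined_by_PO (E : pred Omega) :
  (forall a a' y m, E ((a, y), m) = E ((a', y), m)) -> determined_by PO E.
Proof.
by move=> eE [[a y] m] [[a' y'] m']; rewrite /PO /Yvec /Mvec /= => -[-> ->].
Qed.

Section Identification.
Variables (R : realFieldType) (p : {ffun Omega -> R}).

Let PrA a := Pr p [pred w | Aof w == a].

Section Randomization.
Hypothesis indepA : A3 p.

(* Consistency (A1) is built into Yobs and Mobs, so on {A = a} every observed
   event coincides with an event on the potential outcomes alone. *)
Lemma Pr_treated a (E F : pred Omega) :
  determined_by PO F -> E =1 [pred w | (Aof w == a) && F w] -> Pr p E = PrA a * Pr p F.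
Proof. by move=> detF eE; rewrite (Pr_ext p eE); apply: Pr_indep indepA _ detF => w w' ->. Qed.

Lemma Pr_treated_mediator a m :
  Pr p [pred w | (Aof w == a) && (Mobs w == m)] = PrA a * Pr p [pred w | Mpot a w == m].
Proof. by apply: Pr_treated; [apply: determined_by_PO | case: a => -[[[] ?] ?]]. Qed.

Lemma Pr_treated_outcome a m :
  Pr p [pred w | Yobs w && ((Aof w == a) && (Mobs w == m))] =
  PrA a * Pr p [pred w | Ypot a m w && (Mpot a w == m)].
Proof.
apply: Pr_treated; first exact: determined_by_PO.
by case: a m => -[] -[[[] ?] [[] []]]; rewrite /= ?andbF.
Qed.

Lemma gamE a : PrA a != 0 -> gam p a = Pr p (Mpot a).
Proof.
rewrite /gam /CPr (@Pr_treated a _ (Mpot a)) => [PrA_neq0||].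
- by rewrite [PrA a * _]mulrC mulfK.
- exact: determined_by_PO.
by case: a => -[[[] ?] ?]; rewrite /= ?andbT ?andbF.
Qed.

Lemma mu1E a : PrA a != 0 -> mu1 p a = Pr p (Ycw a a).
Proof.
rewrite /mu1 /CPr (@Pr_treated a _ (Ycw a a)) => [PrA_neq0||].
- by rewrite [PrA a * _]mulrC mulfK.
- exact: determined_by_PO.
by case: a => -[[[] ?] ?]; rewrite /= ?andbT ?andbF.
Qed.

Lemma CPr_mediator_given_treated_outcome : PrA true != 0 ->
  CPr p [pred w | Mobs w] [pred w | Aof w && Yobs w] =
  Pr p [pred w | Ypot true true w && Mpot true w] / Pr p (Ycw true true).
Proof.
move=> PrA_neq0; rewrite /CPr.
rewrite (@Pr_treated true _ [pred w | Ypot true true w && Mpot true w]).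
- rewrite (@Pr_treated true [pred w | Aof w && Yobs w] (Ycw true true)).
  + by rewrite -mulf_div (divff PrA_neq0) mul1r.
  + exact: determined_by_PO.
  by move=> -[[[] ?] ?].
- exact: determined_by_PO.
by move=> -[[[] ?] [[] ?]]; rewrite /= ?andbF ?andbT.
Qed.
End Randomization.

Section MediatorIndependence.
Hypothesis indepYM : A4 p.

Lemma Pr_Ypot_indep a m (F : pred Omega) : determined_by Mvec F ->
  Pr p [pred w | Ypot a m w && F w] = Pr p (Ypot a m) * Pr p F.
Proof. by apply: Pr_indep indepYM _ => w w' eYw; rewrite /Ypot eYw. Qed.

Lemma mu2E a m : A3 p -> Pr p [pred w | (Aof w == a) && (Mobs w == m)] != 0 ->
  mu2 p a m = Pr p (Ypot a m).
Proof.
move=> indepA; rewrite /mu2 /CPr Pr_treated_outcome // Pr_treated_mediator // => den_neq0.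
rewrite Pr_Ypot_indep => [|w w' eMw]; last by rewrite /Mpot eMw.
by rewrite mulrCA mulfK.
Qed.
End MediatorIndependence.
End Identification.

Section Monotonicity.
Variables (R : realFieldType) (p : {ffun Omega -> R}).
Hypotheses (p_ge0 : forall w, 0 <= p w) (mono : A2 p).

Lemma Ycw_monotone w : 0 < p w -> Ycw false false w -> Ycw true true w.
Proof. by case: w => [[? [[[[] []] []] []]] [[] []]] /mono []. Qed.

Lemma alpha_event_as w : 0 < p w ->
  (~~ Ycw true false w && ~~ Ycw false false w) && Ycw true true w =
  (Ypot true true w && ~~ Ypot true false w) && (Mpot true w && ~~ Mpot false w).
Proof. by case: w => [[? [[[[] []] []] []]] [[] []]] /mono []. Qed.

Lemma beta_add_alpha :
  beta p + alpha p = (Pr p (Ycw true true) - Pr p (Ycw false false)) / Pr p (Ycw true true).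
Proof.
rewrite /beta /alpha /CPr -mulrDl -Pr_diff // => [|w /Ycw_monotone]; last by [].
congr (_ / _).
rewrite (Pr_split p [pred w | Ycw true true w && ~~ Ycw false false w] (Ycw true false)).
by congr (_ + _); apply: Pr_ext => w /=; do 3 case: (Ycw _ _ w).
Qed.

Lemma alphaE : A4 p ->
  alpha p = (Pr p (Ypot true true) - Pr p (Ypot true false)) *
            (Pr p (Mpot true) - Pr p (Mpot false)) / Pr p (Ycw true true).
Proof.
move=> indepYM; rewrite /alpha /CPr (Pr_eq_as p_ge0 alpha_event_as).
rewrite (Pr_indep indepYM) => [|w w' eYw|w w' eMw]; last 2 first.
- by rewrite /Ypot eYw.
- by rewrite /Mpot eMw.
have monoY w : 0 < p w -> Ypot true false w -> Ypot true true w by case/mono => /implyP.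
have monoM w : 0 < p w -> Mpot false w -> Mpot true w by case/mono => _ _ _ /implyP.
by rewrite !Pr_diff.
Qed.
End Monotonicity.

Theorem proposition10 (R : realFieldType) (p : {ffun Omega -> R}) (eps : R) :
  is_distr p -> 0 < eps ->
  A2 p -> A3 p -> A4 p -> A5 p eps -> A6 p eps ->
  alpha p = (1 - mu2 p true false / mu2 p true true) * (1 - gam p false / gam p true) *
            CPr p [pred w | Mobs w] [pred w | Aof w && Yobs w]
  /\ beta p = (1 - mu1 p false / mu1 p true) - alpha p.
Proof.
move=> [p_ge0 _] eps_gt0 mono indepA indepYM pos posY.
have cell_gt0 a m : 0 < Pr p [pred w | (Aof w == a) && (Mobs w == m)].
  exact: lt_le_trans eps_gt0 (pos a m).
have PrA_neq0 a : Pr p [pred w | Aof w == a] != 0.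
  by rewrite gt_eqF // (lt_le_trans (cell_gt0 a true)) // Pr_le // => w /andP[].
have M1_gt0 : 0 < Pr p (Mpot true).
  by rewrite (lt_le_trans (cell_gt0 true true)) // Pr_le // => -[[[] ?] ?] /andP[] // _ /eqP.
have Y11_gt0 : 0 < Pr p (Ypot true true).
  by rewrite -(mu2E indepYM indepA) ?(lt_le_trans eps_gt0 posY) ?gt_eqF.
have detM1 : determined_by Mvec (Mpot true) by move=> w w' eMw; rewrite /Mpot eMw.
have Y11M1_gt0 : 0 < Pr p [pred w | Ypot true true w && Mpot true w].
  by rewrite (Pr_Ypot_indep indepYM) ?mulr_gt0.
have D_gt0 : 0 < Pr p (Ycw true true).
  by rewrite (lt_le_trans Y11M1_gt0) // Pr_le // => -[[? ?] [[] ?]] /andP[].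
rewrite -[beta p](addrK (alpha p)) beta_add_alpha // alphaE //.
rewrite !mu2E ?gt_eqF // !gamE // !mu1E // CPr_mediator_given_treated_outcome //.
rewrite (Pr_Ypot_indep indepYM) //.
by split; field; rewrite !gt_eqF.
Qed.
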